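(* Assume the setting and the CRAIG recurrence described in the context, and let $k\ge1$ be such that $u^{(k)},p^{(k)},\zeta_k$ and $g_k$ (hence $\beta_{k+1}$) are defined. Then $Mu^{(k)}+Ap^{(k)}=0$ and $b-A^Tu^{(k)}+Cp^{(k)}=-\zeta_k\,N g_k$ (which equals $-\zeta_k\beta_{k+1}Nq_{k+1}$ when $\beta_{k+1}>0$). In particular the residual of the second block equation is orthogonal (in the Euclidean inner product) to $q_1,\dots,q_k$, and $\|b-A^Tu^{(k)}+Cp^{(k)}\|_{N^{-1}}=\beta_{k+1}|\zeta_k|$, so that $\|b-A^Tu^{(k)}+Cp^{(k)}\|_{N^{-1}}/\|b\|_{N^{-1}}=\beta_{k+1}|\zeta_k|/\beta_1$.
   Context: Setting: $M\in\mathbb{R}^{m\times m}$ is symmetric positive definite, $A\in\mathbb{R}^{m\times n}$ ($n\le m$) has full column rank, $C\in\mathbb{R}^{n\times n}$ is symmetric positive semidefinite, $b\in\mathbb{R}^n$ is nonzero, and $N\in\mathbb{R}^{n\times n}$ is symmetric positive definite (the preconditioner). For a symmetric positive definite $G$ write $\|x\|_G=(x^TGx)^{1/2}$. The generalized saddle point system is $Mu+Ap=0$, $A^Tu-Cp=b$, with unique solution $(u_*,p_* )$; $S=A^TM^{-1}A+C$. CRAIG recurrence (exact arithmetic): Initialization: $\beta_1=\|b\|_{N^{-1}}$, $q_1=N^{-1}b/\beta_1$, $r_1=q_1$, $w_1=M^{-1}Aq_1$, $s_1=Cr_1$, $\alpha_1=(w_1^TMw_1+r_1^Ts_1)^{1/2}$,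 $v_1=w_1/\alpha_1$, $t_1=s_1/\alpha_1$, $\zeta_1=\beta_1/\alpha_1$, $u^{(1)}=\zeta_1v_1$, $p^{(1)}=-(\zeta_1/\alpha_1)r_1$. For $k=1,2,\dots$: $g_k=N^{-1}(A^Tv_k+t_k)-\alpha_kq_k$, $\beta_{k+1}=\|g_k\|_N$; if $\beta_{k+1}=0$ the recurrence stops; otherwise $q_{k+1}=g_k/\beta_{k+1}$, $w_{k+1}=M^{-1}Aq_{k+1}-\beta_{k+1}v_k$, $r_{k+1}=q_{k+1}-(\beta_{k+1}/\alpha_k)r_k$, $s_{k+1}=Cr_{k+1}$, $\alpha_{k+1}=(w_{k+1}^TMw_{k+1}+r_{k+1}^Ts_{k+1})^{1/2}$, $v_{k+1}=w_{k+1}/\alpha_{k+1}$, $t_{k+1}=s_{k+1}/\alpha_{k+1}$, $\zeta_{k+1}=-(\beta_{k+1}/\alpha_{k+1})\zeta_k$, $u^{(k+1)}=u^{(k)}+\zeta_{k+1}v_{k+1}$, $p^{(k+1)}=p^{(k)}-(\zeta_{k+1}/\alpha_{k+1})r_{k+1}$. *)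

From HB Require Import structures.
From mathcomp Require Import all_boot all_order all_algebra.
Set Implicit Arguments. Unset Strict Implicit. Unset Printing Implicit Defensive.
Import Order.TTheory GRing.Theory Num.Theory.
Local Open Scope ring_scope.

Definition qform (R : pzRingType) (k : nat) (G : 'M[R]_k) (x : 'cV[R]_k) : R :=
  (x^T *m G *m x) ord0 ord0.

Definition dotv (R : pzRingType) (k : nat) (x y : 'cV[R]_k) : R :=
  (x^T *m y) ord0 ord0.

Definition normG (R : rcfType) (k : nat) (G : 'M[R]_k) (x : 'cV[R]_k) : R :=
  Num.sqrt (qform G x).

Definition sym_pos_def (R : realFieldType) (k : nat) (G : 'M[R]_k) : Prop :=
  G^T = G /\ forall x : 'cV[R]_k, x != 0 -> 0 < qform G x.

Definition sym_pos_semidef (R : realFieldType) (k : nat) (G : 'M[R]_k) : Prop :=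
  G^T = G /\ forall x : 'cV[R]_k, 0 <= qform G x.

Record craig_state (R : Type) (m n : nat) := CraigState {
  cs_q : 'cV[R]_n; cs_r : 'cV[R]_n; cs_w : 'cV[R]_m; cs_s : 'cV[R]_n;
  cs_alpha : R; cs_v : 'cV[R]_m; cs_t : 'cV[R]_n; cs_zeta : R;
  cs_u : 'cV[R]_m; cs_p : 'cV[R]_n }.

Section Craig.
Variables (R : rcfType) (m n : nat).
Variables (M : 'M[R]_m) (A : 'M[R]_(m, n)) (C : 'M[R]_n) (N : 'M[R]_n)
          (b : 'cV[R]_n).

Definition craig_beta1 : R := normG (invmx N) b.

Definition craig_init : craig_state R m n :=
  let q1 := craig_beta1^-1 *: (invmx N *m b) in
  let r1 := q1 in
  let w1 := invmx M *m (A *m q1) in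
  let s1 := C *m r1 in
  let a1 := Num.sqrt (qform M w1 + dotv r1 s1) in
  let v1 := a1^-1 *: w1 in
  let t1 := a1^-1 *: s1 in
  let z1 := craig_beta1 / a1 in
  @CraigState R m n q1 r1 w1 s1 a1 v1 t1 z1 (z1 *: v1) (- ((z1 / a1) *: r1)).

Definition craig_g_of (st : craig_state R m n) : 'cV[R]_n :=
  invmx N *m (A^T *m cs_v st + cs_t st) - cs_alpha st *: cs_q st.

(* state k+1 from state k (meaningful when beta_{k+1} <> 0) *)
Definition craig_step (st : craig_state R m n) : craig_state R m n :=
  let g := craig_g_of st in
  let be := normG N g in
  let q' := be^-1 *: g in
  let w' := invmx M *m (A *m q') - be *: cs_v st in
  let r' := q' - (be / cs_alpha st) *: cs_r st in
  let s' := C *m r' in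
  let a' := Num.sqrt (qform M w' + dotv r' s') in
  let v' := a'^-1 *: w' in
  let t' := a'^-1 *: s' in
  let z' := - (be / a') * cs_zeta st in
  @CraigState R m n q' r' w' s' a' v' t' z'
    (cs_u st + z' *: v') (cs_p st - (z' / a') *: r').

(* 0-based iteration: craig_st j is the state with (1-based) index j+1 *)
Fixpoint craig_st (j : nat) : craig_state R m n :=
  match j with
  | O => craig_init
  | S j' => craig_step (craig_st j')
  end.

(* 1-based accessors, meaningful for k >= 1 *)
Definition craig_q (k : nat) := cs_q (craig_st k.-1).
Definition craig_r (k : nat) := cs_r (craig_st k.-1).
Definition craig_alpha (k : nat) := cs_alpha (craig_st k.-1).
Definition craig_zeta (k : nat) := cs_zeta (craig_st k.-1).
Definition craig_u (k : nat) := cs_u (craig_st k.-1).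
Definition craig_p (k : nat) := cs_p (craig_st k.-1).
Definition craig_g (k : nat) := craig_g_of (craig_st k.-1).
(* beta_{k+1} = ||g_k||_N, for k >= 1; beta 1 = beta_1 *)
Definition craig_beta (k : nat) : R :=
  if k is j.+2 then normG N (craig_g j.+1) else craig_beta1.

End Craig.

From HB Require Import structures.
From mathcomp Require Import all_boot all_order all_algebra.
Import Order.TTheory GRing.Theory Num.Theory.
Local Open Scope ring_scope.

(* Write rho_i = r_i / alpha_i, so that t_i = C rho_i. By induction M w_i = A r_i, i.e.
   M v_i = A rho_i, so every update of (u, p) lies in the kernel of the first block row.
   The residual of the second block changes at step i by -zeta_i (A^T v_i + C rho_i)
   = -zeta_i N (g_i + alpha_i q_i); as N g_{i-1} = beta_i N q_i and
   zeta_i alpha_i = -beta_i zeta_{i-1}, the q-terms cancel and the residual stays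
   -zeta_i N g_i. Orthogonality to q_1, ..., q_k comes from the bidiagonalization
   relations M^-1 A q_i = alpha_i v_i + beta_i v_{i-1}, q_i = alpha_i rho_i + beta_i rho_{i-1}:
   they show jointly by induction that the q_i are N-orthonormal and the pairs
   (v_i, rho_i) are orthonormal for v^T M v' + rho^T C rho'. Finally
   ||N g||_{N^-1} = ||g||_N gives the norm of the residual. *)

Section DotProduct.
Context {R : comPzRingType}.
Implicit Types (k l : nat) (a : R).

Lemma dotvC {k} (x y : 'cV[R]_k) : dotv x y = dotv y x.
Proof. by rewrite /dotv; have := trmx_mul x^T y; rewrite trmxK => <-; rewrite [RHS]mxE. Qed.

Lemma dotvDr {k} (x y z : 'cV[R]_k) : dotv x (y + z) = dotv x y + dotv x z.
Proof. by rewrite /dotv mulmxDr mxE. Qed.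

Lemma dotvZr {k} a (x y : 'cV[R]_k) : dotv x (a *: y) = a * dotv x y.
Proof. by rewrite /dotv -scalemxAr mxE. Qed.

Lemma dotvNr {k} (x y : 'cV[R]_k) : dotv x (- y) = - dotv x y.
Proof. by rewrite /dotv mulmxN mxE. Qed.

Lemma dotvBr {k} (x y z : 'cV[R]_k) : dotv x (y - z) = dotv x y - dotv x z.
Proof. by rewrite dotvDr dotvNr. Qed.

Lemma dotvDl {k} (x y z : 'cV[R]_k) : dotv (x + y) z = dotv x z + dotv y z.
Proof. by rewrite dotvC dotvDr !(dotvC z). Qed.

Lemma dotvZl {k} a (x y : 'cV[R]_k) : dotv (a *: x) y = a * dotv x y.
Proof. by rewrite dotvC dotvZr dotvC. Qed.

Lemma dotv_mulmx {k l} (G : 'M[R]_(k, l)) x y : dotv x (G *m y) = dotv (G^T *m x) y.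
Proof. by rewrite /dotv trmx_mul trmxK mulmxA. Qed.

Lemma dotv_sym {k} {G : 'M[R]_k} : G^T = G -> forall x y, dotv x (G *m y) = dotv y (G *m x).
Proof. by move=> sG x y; rewrite dotv_mulmx sG dotvC. Qed.

Lemma qformE {k} (G : 'M[R]_k) x : qform G x = dotv x (G *m x).
Proof. by rewrite /qform /dotv mulmxA. Qed.

End DotProduct.

Section QuadraticForms.
Context {R : rcfType} {k : nat}.
Implicit Types (G : 'M[R]_k) (x : 'cV[R]_k).

Lemma sym_pos_def_qform_ge0 {G} : sym_pos_def G -> forall x, 0 <= qform G x.
Proof.
case=> _ posG x; have [->|/posG/ltW//] := eqVneq x 0.
by rewrite qformE mulmx0 /dotv mulmx0 mxE.
Qed.

Lemma sym_pos_def_unitmx {G} : sym_pos_def G -> G \in unitmx.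
Proof.
case=> _ posG; rewrite -row_free_unit -kermx_eq0.
apply/rowV0P => y /sub_kermxP yG0; apply/eqP; apply: contraT => y0.
have yT0 : y^T != 0 by rewrite -trmx0 (inj_eq trmx_inj).
by have := posG _ yT0; rewrite /qform trmxK yG0 mul0mx mxE ltxx.
Qed.

Lemma qform_invmx G x : G \in unitmx -> qform (invmx G) x = qform G (invmx G *m x).
Proof. by move=> uG; rewrite !qformE mulmxA mulmxV // mul1mx dotvC. Qed.

Lemma sym_pos_def_invmx {G} : sym_pos_def G -> sym_pos_def (invmx G).
Proof.
move=> pdG; have uG := sym_pos_def_unitmx pdG.
split; first by rewrite trmx_inv pdG.1.
move=> x x0; rewrite qform_invmx //; apply: pdG.2.
by apply: contra x0 => /eqP Gx0; rewrite -[x]mul1mx -(mulmxV uG) -mulmxA Gx0 mulmx0.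
Qed.

Lemma normG_gt0 {G x} : sym_pos_def G -> x != 0 -> 0 < normG G x.
Proof. by move=> pdG x0; rewrite sqrtr_gt0 pdG.2. Qed.

Lemma normGZ G a x : normG G (a *: x) = `|a| * normG G x.
Proof.
by rewrite /normG qformE -scalemxAr dotvZl dotvZr mulrA -expr2 sqrtrM ?sqr_ge0 // sqrtr_sqr -qformE.
Qed.

Lemma normG_invmx_mul G x : G \in unitmx -> normG (invmx G) (G *m x) = normG G x.
Proof. by move=> uG; rewrite /normG qform_invmx // mulmxA mulVmx // mul1mx. Qed.

End QuadraticForms.

Definition orthonormal_upto {R : pzRingType} (f : nat -> nat -> R) (K : nat) : Prop :=
  forall i j, (i <= K)%N -> (j <= K)%N -> f i j = (i == j)%:R.

Lemma orthonormal_uptoS {R : pzRingType} {f : nat -> nat -> R} {K : nat} :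
  (forall i j, f i j = f j i) -> orthonormal_upto f K ->
  (forall j, (j <= K)%N -> f j K.+1 = 0) -> f K.+1 K.+1 = 1 ->
  orthonormal_upto f K.+1.
Proof.
move=> fC onK f0 f1 i j; rewrite [(i <= _)%N]leq_eqVlt [(j <= _)%N]leq_eqVlt !ltnS.
case/predU1P=> [->|iK]; case/predU1P=> [->|jK].
- by rewrite eqxx.
- by rewrite fC f0 // gtn_eqF.
- by rewrite f0 // ltn_eqF.
- exact: onK.
Qed.

Section Craig.
Variables (R : rcfType) (m n : nat).
Variables (M : 'M[R]_m) (A : 'M[R]_(m, n)) (C : 'M[R]_n) (N : 'M[R]_n) (b : 'cV[R]_n).
Hypotheses (pdM : sym_pos_def M) (psdC : sym_pos_semidef C) (pdN : sym_pos_def N)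
  (b0 : b != 0).

(* Indices are 0-based: [q i] is q_(i+1) and [be i] is beta_(i+2). *)
Local Notation st i := (craig_st M A C N b i).
Local Notation q i := (cs_q (st i)).
Local Notation r i := (cs_r (st i)).
Local Notation w i := (cs_w (st i)).
Local Notation al i := (cs_alpha (st i)).
Local Notation v i := (cs_v (st i)).
Local Notation z i := (cs_zeta (st i)).
Local Notation u i := (cs_u (st i)).
Local Notation p i := (cs_p (st i)).
Local Notation g i := (craig_g_of A N (st i)).
Local Notation be i := (normG N (g i)).
Local Notation beta1 := (craig_beta1 N b).
Local Notation rho i := ((al i)^-1 *: r i).
Local Notation Kv i := (A^T *m v i + C *m rho i).
Local Notation res i := (b - A^T *m u i + C *m p i).

Let uM : M \in unitmx := sym_pos_def_unitmx pdM.
Let uN : N \in unitmx := sym_pos_def_unitmx pdN.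

Lemma craig_beta1_gt0 : 0 < beta1.
Proof. exact: normG_gt0 (sym_pos_def_invmx pdN) b0. Qed.

Lemma craig_q0 : q 0 = beta1^-1 *: (invmx N *m b). Proof. by []. Qed.
Lemma craig_z0 : z 0 = beta1 / al 0. Proof. by []. Qed.
Lemma craig_u0 : u 0 = z 0 *: v 0. Proof. by []. Qed.
Lemma craig_p0 : p 0 = - ((z 0 / al 0) *: r 0). Proof. by []. Qed.
Lemma craig_qS i : q i.+1 = (be i)^-1 *: g i. Proof. by []. Qed.
Lemma craig_rS i : r i.+1 = q i.+1 - (be i / al i) *: r i. Proof. by []. Qed.
Lemma craig_zS i : z i.+1 = - (be i / al i.+1) * z i. Proof. by []. Qed.
Lemma craig_uS i : u i.+1 = u i + z i.+1 *: v i.+1. Proof. by []. Qed.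
Lemma craig_pS i : p i.+1 = p i - (z i.+1 / al i.+1) *: r i.+1. Proof. by []. Qed.

Lemma craig_alphaE i : al i = Num.sqrt (qform M (w i) + dotv (r i) (C *m r i)).
Proof. by case: i. Qed.

Lemma craig_vE i : v i = (al i)^-1 *: w i.
Proof. by case: i. Qed.

Lemma craig_tE i : cs_t (st i) = C *m rho i.
Proof. by case: i => [|i] /=; rewrite scalemxAr. Qed.

Lemma craig_gE i : g i = invmx N *m Kv i - al i *: q i.
Proof. by rewrite /craig_g_of craig_tE. Qed.

Lemma craig_mulmx_w i : M *m w i = A *m r i.
Proof.
elim: i => [|i IH] /=; first by rewrite mulmxA mulmxV // mul1mx.
rewrite mulmxBr mulmxA mulmxV // mul1mx craig_vE !mulmxBr -!scalemxAr IH.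
by rewrite scalerA mulrC.
Qed.

Lemma craig_first_block i : M *m u i + A *m p i = 0.
Proof.
elim: i => [|i IH].
  by rewrite craig_u0 craig_p0 craig_vE mulmxN -[A *m _]scalemxAr -2![M *m _]scalemxAr craig_mulmx_w scalerA subrr.
rewrite craig_uS craig_pS mulmxDr mulmxBr addrACA IH add0r.
by rewrite craig_vE -[A *m _]scalemxAr -2![M *m _]scalemxAr craig_mulmx_w scalerA subrr.
Qed.

Lemma craig_mulmx_g i : N *m g i = Kv i - al i *: (N *m q i).
Proof. by rewrite craig_gE mulmxBr mulmxA mulmxV // mul1mx scalemxAr. Qed.

Lemma craig_g_scale i : be i != 0 -> g i = be i *: q i.+1.
Proof. by move=> be0; rewrite craig_qS scalerA mulfV // scale1r. Qed.

Lemma craig_residual0 : res 0 = b - z 0 *: Kv 0.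
Proof.
rewrite craig_u0 craig_p0; move: (z 0) (al 0) (v 0) (r 0) => c a x y.
by rewrite mulmxN -!scalemxAr scalerDr opprD addrA scalerA mulrC.
Qed.

Lemma craig_residualS i : res i.+1 = res i - z i.+1 *: Kv i.+1.
Proof.
rewrite craig_uS craig_pS.
move: (u i) (p i) (z i.+1) (al i.+1) (v i.+1) (r i.+1) => x y c a x' y'.
rewrite mulmxDr mulmxBr -!scalemxAr scalerDr scalerA mulrC !opprD !addrA.
by congr (_ + _); rewrite addrAC.
Qed.

Lemma craig_residual K :
  (forall i, (i <= K)%N -> al i != 0) -> (forall i, (i < K)%N -> be i != 0) ->
  res K = - (z K *: (N *m g K)).
Proof.
elim: K => [|K IH] al0 be0.
  have a0 := al0 0%N (leqnn 0); have beta10 := lt0r_neq0 craig_beta1_gt0.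
  rewrite craig_residual0 craig_mulmx_g craig_q0 -[N *m _]scalemxAr mulmxA mulmxV // mul1mx craig_z0.
  move: (al 0) beta1 a0 beta10 => a c a0 c0.
  by rewrite scalerBr opprB !scalerA divfK // mulfV // scale1r.
have al0' i : (i <= K)%N -> al i != 0 by move/leqW; apply: al0.
have be0' i : (i < K)%N -> be i != 0 by move/ltnW; apply: be0.
have aS := al0 K.+1 (leqnn _); have bK := be0 K (ltnSn K).
have KvS : Kv K.+1 = N *m g K.+1 + al K.+1 *: (N *m q K.+1) by rewrite craig_mulmx_g subrK.
have coef : z K.+1 * al K.+1 = - (z K * be K).
  by rewrite craig_zS !mulNr mulrAC divfK // mulrC.
rewrite craig_residualS IH // KvS (craig_g_scale K bK).
by rewrite -[N *m (_ *: _)]scalemxAr scalerDr 2!scalerA coef scaleNr opprB addKr.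
Qed.

Let ipN i j := dotv (q i) (N *m q j).
Let ipMC i j := dotv (v i) (M *m v j) + dotv (rho i) (C *m rho j).

Lemma ipN_sym i j : ipN i j = ipN j i.
Proof. by rewrite /ipN (dotv_sym pdN.1). Qed.

Lemma ipMC_sym i j : ipMC i j = ipMC j i.
Proof. by rewrite /ipMC (dotv_sym pdM.1) (dotv_sym psdC.1). Qed.

Lemma ipN_diag0 : ipN 0 0 = 1.
Proof.
have beta10 := lt0r_neq0 craig_beta1_gt0.
have beta1_sqr : beta1 ^+ 2 = qform (invmx N) b.
  by rewrite sqr_sqrtr // qform_invmx // (sym_pos_def_qform_ge0 pdN).
rewrite /ipN craig_q0 -scalemxAr dotvZl dotvZr mulmxA mulmxV // mul1mx dotvC -qformE.
by rewrite -beta1_sqr mulrA -expr2 -exprMn mulVf // expr1n.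
Qed.

Lemma ipN_diagS i : be i != 0 -> ipN i.+1 i.+1 = 1.
Proof.
move=> be0; have be_sqr : be i ^+ 2 = qform N (g i).
  by rewrite sqr_sqrtr // (sym_pos_def_qform_ge0 pdN).
rewrite /ipN craig_qS -scalemxAr dotvZl dotvZr -qformE -be_sqr.
by rewrite mulrA -expr2 -exprMn mulVf // expr1n.
Qed.

Lemma ipMC_diag i : al i != 0 -> ipMC i i = 1.
Proof.
move=> al0; have al_sqr : al i ^+ 2 = qform M (w i) + qform C (r i).
  by rewrite craig_alphaE -qformE sqr_sqrtr // addr_ge0 ?psdC.2 ?(sym_pos_def_qform_ge0 pdM).
rewrite /ipMC craig_vE -!scalemxAr !dotvZl !dotvZr -!qformE !mulrA -mulrDr -!expr2.
by rewrite -al_sqr -exprMn mulVf // expr1n.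
Qed.

Lemma craig_invM_Aq0 : al 0 != 0 -> invmx M *m (A *m q 0) = al 0 *: v 0.
Proof. by move=> al0; rewrite craig_vE scalerA mulfV // scale1r. Qed.

Lemma craig_invM_AqS i : al i.+1 != 0 ->
  invmx M *m (A *m q i.+1) = al i.+1 *: v i.+1 + be i *: v i.
Proof. by move=> al0; rewrite [v i.+1]craig_vE scalerA mulfV // scale1r subrK. Qed.

Lemma craig_q0_rho : al 0 != 0 -> q 0 = al 0 *: rho 0.
Proof. by move=> al0; rewrite scalerA mulfV // scale1r. Qed.

Lemma craig_qS_rho i : al i.+1 != 0 -> q i.+1 = al i.+1 *: rho i.+1 + be i *: rho i.
Proof. by move=> al0; rewrite scalerA mulfV // scale1r craig_rS scalerA subrK. Qed.

Lemma craig_dotv_Kv x j :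
  dotv x (Kv j) = dotv (invmx M *m (A *m x)) (M *m v j) + dotv x (C *m rho j).
Proof.
by rewrite dotvDr (dotv_mulmx M) pdM.1 mulmxA mulmxV // mul1mx dotv_mulmx trmxK.
Qed.

Lemma craig_dotv_q0_Kv j : al 0 != 0 -> dotv (q 0) (Kv j) = al 0 * ipMC 0 j.
Proof.
move=> al0; rewrite craig_dotv_Kv craig_invM_Aq0 // craig_q0_rho //.
by rewrite (dotvZl (al 0) (v 0)) (dotvZl (al 0) (rho 0)) -mulrDr.
Qed.

Lemma craig_dotv_qS_Kv i j : al i.+1 != 0 ->
  dotv (q i.+1) (Kv j) = al i.+1 * ipMC i.+1 j + be i * ipMC i j.
Proof.
move=> al0; rewrite craig_dotv_Kv craig_invM_AqS // craig_qS_rho // /ipMC.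
move: (v i.+1) (v i) (rho i.+1) (rho i) (al i.+1) (be i) => x1 x0 y1 y0 a c.
by rewrite !dotvDl !dotvZl addrACA -!mulrDr.
Qed.

Lemma craig_orthogonal K : (forall i, (i <= K)%N -> al i != 0) ->
  orthonormal_upto ipN K -> orthonormal_upto ipMC K ->
  forall j, (j <= K)%N -> dotv (q j) (N *m g K) = 0.
Proof.
move=> al0 onN onMC [|j] jK; rewrite craig_mulmx_g dotvBr dotvZr.
  rewrite craig_dotv_q0_Kv ?al0 // -/(ipN 0 K) onMC // onN //.
  by have [<-|ne] := eqVneq 0%N K; rewrite ?subrr // !mulr0 subrr.
rewrite craig_dotv_qS_Kv ?al0 // -/(ipN j.+1 K) onMC // onN // (onMC j K) ?(ltnW jK) //.
rewrite (ltn_eqF jK) mulr0 addr0.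
by have [<-|ne] := eqVneq j.+1 K; rewrite ?subrr // !mulr0 subrr.
Qed.

Lemma ipMC_next_orthogonal K : al K.+1 != 0 -> (forall i, (i <= K)%N -> be i != 0) ->
  orthonormal_upto ipN K.+1 -> orthonormal_upto ipMC K ->
  forall j, (j <= K)%N -> ipMC K.+1 j = 0.
Proof.
move=> aS be0 onN onMC j jK; apply: (mulfI aS); rewrite mulr0.
have Kvj : Kv j = N *m g j + al j *: (N *m q j) by rewrite craig_mulmx_g subrK.
have gj : N *m g j = be j *: (N *m q j.+1).
  by rewrite {1}(craig_g_scale j (be0 j jK)) -scalemxAr.
have := craig_dotv_qS_Kv K j aS.
rewrite Kvj dotvDr gj dotvZr dotvZr -/(ipN K.+1 j.+1) -/(ipN K.+1 j).
rewrite onN // onN ?(leqW jK) // (onMC K j) // eqSS (@gtn_eqF j K.+1 jK) mulr0 addr0 => E.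
have -> : al K.+1 * ipMC K.+1 j = be j * (K == j)%:R - be K * (K == j)%:R.
  by rewrite E addrK.
by have [<-|ne] := eqVneq K j; rewrite ?subrr // !mulr0 subrr.
Qed.

Lemma craig_orthonormal K :
  (forall i, (i <= K)%N -> al i != 0) -> (forall i, (i < K)%N -> be i != 0) ->
  orthonormal_upto ipN K /\ orthonormal_upto ipMC K.
Proof.
elim: K => [|K IH] al0 be0.
  split=> i j; rewrite !leqn0 => /eqP-> /eqP->; rewrite eqxx ?ipN_diag0 //.
  exact/ipMC_diag/al0.
have al0' i : (i <= K)%N -> al i != 0 by move/leqW; apply: al0.
have be0' i : (i < K)%N -> be i != 0 by move/ltnW; apply: be0.
have aS := al0 K.+1 (leqnn _); have bK := be0 K (ltnSn K).
have [onN onMC] := IH al0' be0'.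
have orth := craig_orthogonal K al0' onN onMC.
have onN' : orthonormal_upto ipN K.+1.
  apply: (orthonormal_uptoS ipN_sym onN _ (ipN_diagS K bK)) => j jK.
  by rewrite /ipN craig_qS -scalemxAr dotvZr orth ?mulr0.
split=> //; apply: (orthonormal_uptoS ipMC_sym onMC _ (ipMC_diag K.+1 aS)) => j jK.
by rewrite ipMC_sym (ipMC_next_orthogonal K aS be0 onN' onMC).
Qed.

Lemma craig_residual_orthogonal K :
  (forall i, (i <= K)%N -> al i != 0) -> (forall i, (i < K)%N -> be i != 0) ->
  forall j, (j <= K)%N -> dotv (q j) (N *m g K) = 0.
Proof.
move=> al0 be0; have [onN onMC] := craig_orthonormal K al0 be0.
exact: craig_orthogonal.
Qed.

End Craig.

Theorem mainTheorem3 (R : rcfType) (m n : nat)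
  (M : 'M[R]_m) (A : 'M[R]_(m, n)) (C : 'M[R]_n) (N : 'M[R]_n) (b : 'cV[R]_n)
  (k : nat) :
  sym_pos_def M ->
  (n <= m)%N -> \rank A = n ->
  sym_pos_semidef C ->
  b != 0 ->
  sym_pos_def N ->
  (1 <= k)%N ->
  (* the recurrence has not stopped before step k and all quantities up to
     index k are defined: alpha_1..alpha_k nonzero, beta_2..beta_k nonzero *)
  (forall j, (1 <= j <= k)%N -> craig_alpha M A C N b j != 0) ->
  (forall j, (2 <= j <= k)%N -> craig_beta M A C N b j != 0) ->
  let uk := craig_u M A C N b k in
  let pk := craig_p M A C N b k in
  let zk := craig_zeta M A C N b k in
  let res := b - A^T *m uk + C *m pk in
  M *m uk + A *m pk = 0 /\
      res = - (zk *: (N *m craig_g M A C N b k)) /\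
      (0 < craig_beta M A C N b k.+1 ->
         res = - ((zk * craig_beta M A C N b k.+1) *: (N *m craig_q M A C N b k.+1))) /\
      (forall j, (1 <= j <= k)%N -> dotv (craig_q M A C N b j) res = 0) /\
      normG (invmx N) res = craig_beta M A C N b k.+1 * `|zk| /\
    normG (invmx N) res / normG (invmx N) b
        = craig_beta M A C N b k.+1 * `|zk| / craig_beta M A C N b 1.
Proof.
(* Full column rank of A only serves to keep the recurrence going, which is assumed. *)
move=> pdM _ _ psdC b0 pdN; case: k => [//|K] _ alpha0 beta0 uk pk zk res.
have al0 i : (i <= K)%N -> craig_alpha M A C N b i.+1 != 0 by move=> iK; apply: alpha0.
have be0 i : (i < K)%N -> craig_beta M A C N b i.+2 != 0 by move=> iK; apply: beta0.
have res_g : res = - (zk *: (N *m craig_g M A C N b K.+1)) by apply: craig_residual.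
have res_norm : normG (invmx N) res = craig_beta M A C N b K.+2 * `|zk|.
  by rewrite res_g -scaleNr normGZ normG_invmx_mul ?sym_pos_def_unitmx // normrN mulrC.
split; first exact: craig_first_block.
split; first exact: res_g.
split.
  move=> be_gt0.
  have g_q : craig_g M A C N b K.+1 = craig_beta M A C N b K.+2 *: craig_q M A C N b K.+2.
    by apply: craig_g_scale; rewrite lt0r_neq0.
  by rewrite res_g {1}g_q -scalemxAr scalerA.
split.
  have orth j : (j <= K)%N ->
      dotv (craig_q M A C N b j.+1) (N *m craig_g M A C N b K.+1) = 0.
    by apply: craig_residual_orthogonal.
  by move=> [|j] // /andP[_ jK]; rewrite res_g dotvNr dotvZr orth ?mulr0 ?oppr0.
by split; last rewrite res_norm.
Qed.
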